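(* Let $U\subset X$ be $p$-path open and $E\subset U$. Then $\mathrm{Mod}_p(\Gamma_E^U)=\mathrm{Mod}_p(\Gamma_E^X)$.
   Context: Here $1\le p<\infty$ and $X=(X,d,\mu)$ is a metric space with a positive complete Borel measure $\mu$ such that $0<\mu(B)<\infty$ for all open balls $B$ (no doubling or Poincaré assumption). Curves are nonconstant, compact, rectifiable curves $\gamma:[0,l_\gamma]\to X$ parametrized by arc length. The $p$-modulus of a family $\Gamma$ of curves is $\mathrm{Mod}_p(\Gamma)=\inf\int_X\rho^p\,d\mu$ over nonnegative Borel functions $\rho$ with $\int_\gamma\rho\,ds\ge1$ for all $\gamma\in\Gamma$; a property holds for $p$-a.e. curve if the family of curves where it fails has $p$-modulus zero. A set $U$ is $p$-path open if for $p$-a.e. curve $\gamma:[0,l_\gamma]\to X$, the set $\gamma^{-1}(U)$ is relatively open in $[0,l_\gamma]$. For $E\subset U$, $\Gamma_E^U$ denotes the family of curves $\gamma:[0,l_\gamma]\to U$ with $\gamma^{-1}(E)\ne\emptyset$. *)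

From HB Require Import structures.
From mathcomp Require Import all_boot all_order all_algebra.
From mathcomp Require Import all_classical all_reals all_analysis.
From mathcomp Require Import measurable_realfun.
Set Implicit Arguments. Unset Strict Implicit. Unset Printing Implicit Defensive.
Import Order.TTheory GRing.Theory Num.Theory.
Import numFieldNormedType.Exports.
Local Open Scope classical_set_scope.
Local Open Scope ring_scope.

Section MetricMeasure.
Context {R : realType} {X : Type} (dist : X -> X -> R).

Definition is_metric : Prop :=
  (forall x y, 0 <= dist x y) /\ (forall x y, dist x y = 0 <-> x = y) /\
  (forall x y, dist x y = dist y x) /\
  (forall x y z, dist x z <= dist x y + dist y z).

Definition dball (x : X) (r : R) : set X := [set y | dist x y < r].

Definition dopen (A : set X) : Prop :=
  forall x, A x -> exists2 r : R, 0 < r & dball x r `<=` A.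

Definition dborel (A : set X) : Prop := <<s dopen >> A.

Definition borel_fun (rho : X -> \bar R) : Prop :=
  forall B : set (\bar R), measurable B -> dborel (rho @^-1` B).

(* A (candidate) curve is a pair (l, g) : g restricted to [0, l].
   Length (total variation) of g on [s, t]. *)
Definition dvariation (g : R -> X) (s t : R) : \bar R :=
  ereal_sup [set v | exists (n : nat) (u : nat -> R),
     [/\ u 0%N = s, u n = t, (forall i, (i < n)%N -> u i <= u i.+1) &
          v = (\sum_(i < n) dist (g (u i)) (g (u i.+1)))%:E]].

(* nonconstant compact rectifiable curve parametrized by arc length *)
Definition is_curve (c : R * (R -> X)) : Prop :=
  0 < c.1 /\
  forall s t, 0 <= s -> s <= t -> t <= c.1 -> dvariation c.2 s t = (t - s)%:E.

Definition line_int (rho : X -> \bar R) (c : R * (R -> X)) : \bar R :=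
  \int[@lebesgue_measure R]_(t in (`[0%R, c.1] : set R)) rho (c.2 t).

End MetricMeasure.

Section Modulus.
Context {R : realType} {d : measure_display} {X : measurableType d}
  (dist : X -> X -> R) (mu : {measure set X -> \bar R}) (p : R).

Definition admissible (Gam : set (R * (R -> X))) (rho : X -> \bar R) : Prop :=
  borel_fun dist rho /\ (forall x, (0 <= rho x)%E) /\
  forall c, Gam c -> is_curve dist c -> (1 <= line_int rho c)%E.

Definition Mod (Gam : set (R * (R -> X))) : \bar R :=
  ereal_inf [set (\int[mu]_x (rho x `^ p))%E | rho in admissible Gam].

Definition p_ae (P : R * (R -> X) -> Prop) : Prop :=
  exists2 Gam0 : set (R * (R -> X)), Mod Gam0 = 0%E &
    forall c, is_curve dist c -> ~ Gam0 c -> P c.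

Definition preimage_rel_open (U : set X) (c : R * (R -> X)) : Prop :=
  forall t, 0 <= t <= c.1 -> U (c.2 t) ->
    exists2 e : R, 0 < e & forall s, 0 <= s <= c.1 -> `|s - t| < e -> U (c.2 s).

Definition p_path_open (U : set X) : Prop := p_ae (preimage_rel_open U).

Definition Gamma (E U : set X) : set (R * (R -> X)) :=
  [set c | is_curve dist c /\ (forall t, 0 <= t <= c.1 -> U (c.2 t)) /\
           exists2 t, 0 <= t <= c.1 & E (c.2 t)].
End Modulus.

From HB Require Import structures.
From mathcomp Require Import all_boot all_order all_algebra.
From mathcomp Require Import all_classical all_reals all_analysis.
From mathcomp Require Import measurable_realfun.
From mathcomp Require Import ring lra.
Import Order.TTheory GRing.Theory Num.Theory.
Import numFieldNormedType.Exports.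
Local Open Scope classical_set_scope.
Local Open Scope ring_scope.

(* The inequality Mod(Gamma_E^U) <= Mod(Gamma_E^X) is monotonicity.  Conversely,
   let rho1 be admissible for Gamma_E^U and rho2 admissible for the exceptional
   family Gamma0 of p-path openness, with int rho2^p < eps.  Then max(rho1, rho2)
   is admissible for Gamma_E^X: a curve in Gamma0 is handled by rho2, and any other
   curve meeting E at t0 has gamma^{-1}(U) relatively open, so a subcurve around
   t0 lies in U and meets E, and the rho1-integral over it is already >= 1.
   Finally int max(rho1, rho2)^p <= int rho1^p + eps. *)

Section Curves.
Context {R : realType} {X : Type} {dist : X -> X -> R}.

Lemma curve_dist_le {c : R * (R -> X)} {s t : R} :
  is_curve dist c -> 0 <= s -> s <= t -> t <= c.1 -> dist (c.2 s) (c.2 t) <= t - s.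
Proof.
move=> [_ hc] s0 st tl; rewrite -lee_fin -(hc s t s0 st tl).
apply: ereal_sup_ubound => /=.
exists 1%N, (fun i => if i == 0%N then s else t); split => //.
- by move=> i; rewrite ltnS leqn0 => /eqP ->.
- by rewrite big_ord1.
Qed.

Lemma curve_dist_le_norm {c : R * (R -> X)} {s t : R} :
  is_metric dist -> is_curve dist c -> 0 <= s <= c.1 -> 0 <= t <= c.1 ->
  dist (c.2 s) (c.2 t) <= `|t - s|.
Proof.
move=> [_ [_ [dsym _]]] hc /andP[s0 s1] /andP[t0 t1].
have [st|ts] := leP s t.
  exact: le_trans (curve_dist_le hc s0 st t1) (ler_norm _).
rewrite dsym distrC.
exact: le_trans (curve_dist_le hc t0 (ltW ts) s1) (ler_norm _).
Qed.

Lemma curve_preimage_open_measurable {c : R * (R -> X)} {A : set X} :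
  is_metric dist -> is_curve dist c -> dopen dist A ->
  measurable (`[0, c.1]%classic `&` c.2 @^-1` A).
Proof.
move=> hm hc hA.
pose P := [set q : R * R | 0 <= q.1 <= c.1 /\ 0 < q.2 /\
  dball dist (c.2 q.1) q.2 `<=` A].
suff -> : `[0, c.1]%classic `&` c.2 @^-1` A =
          `[0, c.1]%classic `&` \bigcup_(q in P) ball q.1 q.2.
  apply: measurableI => //; apply: open_measurable.
  by apply: bigcup_open => q _; exact: ball_open.
apply/seteqP; split => s [/= s01 As]; split => //.
  have [r r0 hr] := hA _ As.
  exists (s, r); last exact: ballxx.
  by split => //; move: s01; rewrite in_itv.
have s01' : 0 <= s <= c.1 by move: s01; rewrite in_itv.
case: As => q [q01 [q0 qA]] bq; apply: qA.
move: bq; rewrite -ball_normE /= => bq.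
by apply: le_lt_trans (curve_dist_le_norm hm hc q01 s01') _; rewrite distrC.
Qed.

(* Borel sets are generated by open sets, whose preimages are measurable. *)
Lemma borel_fun_curve_measurable {c : R * (R -> X)} {rho : X -> \bar R} :
  is_metric dist -> is_curve dist c -> borel_fun dist rho ->
  measurable_fun `[0, c.1]%classic (rho \o c.2).
Proof.
move=> hm hc hrho _ B mB.
rewrite comp_preimage -[_ `&` _]/(`[0, c.1]%classic `&` c.2 @^-1` (rho @^-1` B)).
move: (rho @^-1` B) (hrho B mB); apply: smallest_sub; last first.
  by move=> A; exact: curve_preimage_open_measurable.
split.
- by rewrite /= preimage_set0 setI0.
- move=> A /= mA.
  rewrite (_ : _ `&` _ = `[0, c.1]%classic `\` (`[0, c.1]%classic `&` c.2 @^-1` A)).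
    exact: measurableD.
  apply/seteqP; split => x /= [x01 xA]; split => //.
  - by case: xA => _ nAx [].
  - by split => // Ax; apply: xA.
- move=> F mF /=; rewrite preimage_bigcup setI_bigcupr.
  exact: bigcupT_measurable.
Qed.

Lemma dvariation_shift (g : R -> X) (a s t : R) :
  dvariation dist (fun r => g (r + a)) s t = dvariation dist g (s + a) (t + a).
Proof.
congr ereal_sup; apply/seteqP; split => v [n [u [u0 un uinc ->]]].
- exists n, (fun i => u i + a); split; [by rewrite u0 | by rewrite un | | by []].
  by move=> i /uinc; rewrite lerD2r.
- exists n, (fun i => u i - a); split; [by rewrite u0 addrK | by rewrite un addrK | |].
  + by move=> i /uinc; rewrite lerD2r.
  + by under [in RHS]eq_bigr do rewrite !subrK.
Qed.

Definition subcurve (c : R * (R -> X)) (a b : R) : R * (R -> X) :=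
  (b - a, fun s => c.2 (s + a)).

Lemma is_curve_subcurve (c : R * (R -> X)) (a b : R) :
  is_curve dist c -> 0 <= a -> a < b -> b <= c.1 -> is_curve dist (subcurve c a b).
Proof.
move=> [_ hc] a0 ab bl; split => [|s t s0 st /= tl]; first by rewrite /= subr_gt0.
rewrite dvariation_shift hc; first by congr (_%:E); ring.
all: lra.
Qed.

End Curves.

Lemma integral_itv_shift {R : realType} (a b : R) (f : R -> \bar R) :
  a <= b -> measurable_fun `[a, b]%classic f ->
  (forall x, `[a, b]%classic x -> (0 <= f x)%E) ->
  (\int[lebesgue_measure]_(t in `[0%R, (b - a)%R]%classic) f (t + a)%R =
   \int[lebesgue_measure]_(t in `[a, b]%classic) f t)%E.
Proof.
move=> ab mf f0.
pose phi : measurableTypeR R -> measurableTypeR R := fun t => t + a.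
have mphi : measurable_fun setT phi.
  by apply: measurable_funD => //; exact: measurable_cst.
have -> : `[0, b - a]%classic = phi @^-1` `[a, b].
  by apply/seteqP; split => t; rewrite /phi /= !in_itv /= => /andP[? ?];
    apply/andP; split; lra.
transitivity (\int[pushforward lebesgue_measure phi]_(y in `[a, b]%classic) f y)%E.
  by rewrite ge0_integral_pushforward // => x /set_mem; exact: f0.
(* Lebesgue measure is translation invariant: check it on the generating intervals. *)
apply: eq_measure_integral => A mA _; apply/esym.
apply: (@lebesgue_measure_unique R (pushforward lebesgue_measure phi)) => //.
move=> _ [[x y] _ <-]; rewrite /= /pushforward.
rewrite (_ : phi @^-1` _ = `]x - a, y - a]%classic); last first.
  by apply/seteqP; split => t; rewrite /phi /= !in_itv /= => /andP[? ?];
    apply/andP; split; lra.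
rewrite !lebesgue_measure_itv /= !lte_fin ltrBlDr subrK.
by rewrite -!EFinD opprB addrA subrK.
Qed.

Lemma line_int_subcurve_le {R : realType} {X : Type} {dist : X -> X -> R}
    {rho : X -> \bar R} {c : R * (R -> X)} {a b : R} :
  is_metric dist -> is_curve dist c -> borel_fun dist rho ->
  (forall x, (0 <= rho x)%E) -> 0 <= a -> a <= b -> b <= c.1 ->
  (line_int rho (subcurve c a b) <= line_int rho c)%E.
Proof.
move=> hm hc hrho rho0 a0 ab bl.
have mrc := borel_fun_curve_measurable hm hc hrho.
have sub : `[a, b]%classic `<=` `[0, c.1]%classic.
  by move=> t /=; rewrite !in_itv /= => /andP[? ?]; apply/andP; split; lra.
rewrite /line_int /= (integral_itv_shift a b (rho \o c.2)) //.
- by apply: ge0_subset_integral => //= t _; exact: rho0.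
- exact: measurable_funS mrc.
- by move=> t _; exact: rho0.
Qed.

Lemma exists_subinterval_around {R : realType} {l t e : R} :
  0 < l -> 0 <= t <= l -> 0 < e ->
  exists a b : R, [/\ 0 <= a, a < b, b <= l, a <= t <= b &
    forall s, a <= s <= b -> `|s - t| < e].
Proof.
move=> l0 /andP[t0 tl] e0.
exists (Num.max 0 (t - e / 2)), (Num.min l (t + e / 2)).
split.
- by rewrite le_max lexx.
- by rewrite gt_max !lt_min; apply/andP; split; apply/andP; split; lra.
- by rewrite ge_min lexx.
- by rewrite ge_max le_min; apply/andP; split; apply/andP; split; lra.
move=> s /andP[]; rewrite ge_max le_min => /andP[_ hs1] /andP[_ hs2].
by rewrite ltr_norml; apply/andP; split; lra.
Qed.

Section Modulus.
Context {R : realType} {d : measure_display} {X : measurableType d}.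
Context {dist : X -> X -> R} {mu : {measure set X -> \bar R}} {p : R}.
Hypothesis hmetric : is_metric dist.

Lemma Mod_subset {A B : set (R * (R -> X))} :
  A `<=` B -> (Mod dist mu p A <= Mod dist mu p B)%E.
Proof.
move=> AB; apply: ereal_inf_le_tmp => _ [rho [brho [rho0 hrho]] <-].
by exists rho => //; split => //; split => // c /AB; exact: hrho.
Qed.

Lemma Gamma_subcurve {E U : set X} {c : R * (R -> X)} {t : R} :
  E `<=` U -> is_curve dist c -> preimage_rel_open U c ->
  0 <= t <= c.1 -> E (c.2 t) ->
  exists a b, [/\ 0 <= a, a < b, b <= c.1 & Gamma dist E U (subcurve c a b)].
Proof.
move=> EU hc hUc t01 Et.
have [e e0 he] := hUc t t01 (EU _ Et).
have [a [b [a0 ab bl /andP[at0 t0b] hab]]] := exists_subinterval_around hc.1 t01 e0.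
exists a, b; split => //; split; first exact: is_curve_subcurve.
split.
  move=> s /andP[s0 /= sl]; apply: he; first by apply/andP; split; lra.
  by apply: hab; apply/andP; split; lra.
by exists (t - a); [apply/andP; split => /=; lra | rewrite /= subrK].
Qed.

Lemma borel_fun_maxe {rho1 rho2 : X -> \bar R} :
  borel_fun dist rho1 -> borel_fun dist rho2 ->
  borel_fun dist (fun x => maxe (rho1 x) (rho2 x)).
Proof.
move=> brho1 brho2 B mB.
have mrho1 : measurable_fun (setT : set (g_sigma_algebraType (dopen dist))) rho1.
  by move=> _ B' mB'; rewrite setTI; exact: brho1.
have mrho2 : measurable_fun (setT : set (g_sigma_algebraType (dopen dist))) rho2.
  by move=> _ B' mB'; rewrite setTI; exact: brho2.
by have := measurable_maxe mrho1 mrho2 measurableT mB; rewrite setTI.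
Qed.

Lemma admissible_Gamma_maxe {E U : set X} {Gam0 : set (R * (R -> X))}
    {rho1 rho2 : X -> \bar R} :
  E `<=` U -> (forall c, is_curve dist c -> ~ Gam0 c -> preimage_rel_open U c) ->
  admissible dist (Gamma dist E U) rho1 -> admissible dist Gam0 rho2 ->
  admissible dist (Gamma dist E setT) (fun x => maxe (rho1 x) (rho2 x)).
Proof.
move=> EU hUo [brho1 [rho10 hrho1]] [brho2 [rho20 hrho2]].
set rho := fun x => _.
have brho : borel_fun dist rho by exact: borel_fun_maxe.
have rho0 x : (0 <= rho x)%E by rewrite le_max rho10.
split => //; split => // c [hc [_ [t t01 Et]]] _.
have le_rho f : borel_fun dist f -> (forall x, (0 <= f x)%E) ->
    (forall x, (f x <= rho x)%E) -> (line_int f c <= line_int rho c)%E.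
  move=> bf f0 frho.
  apply: ge0_le_integral => //.
  - exact: borel_fun_curve_measurable hmetric hc bf.
  - exact: borel_fun_curve_measurable hmetric hc brho.
have [Gc|nGc] := pselect (Gam0 c).
  apply: le_trans (hrho2 c Gc hc) (le_rho _ brho2 rho20 _) => x.
  by rewrite le_max lexx orbT.
have [a [b [a0 ab bl Gab]]] := Gamma_subcurve EU hc (hUo c hc nGc) t01 Et.
apply: le_trans (hrho1 _ Gab Gab.1) _.
apply: le_trans (line_int_subcurve_le hmetric hc brho1 rho10 a0 (ltW ab) bl) _.
by apply: le_rho brho1 rho10 _ => x; rewrite le_max lexx.
Qed.

Hypothesis hborel : forall A : set X, dborel dist A -> measurable A.

Lemma borel_fun_measurable {rho : X -> \bar R} :
  borel_fun dist rho -> measurable_fun setT rho.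
Proof. by move=> hrho _ B mB; rewrite setTI; apply: hborel; exact: hrho. Qed.

Lemma integral_maxe_poweR_le {rho1 rho2 : X -> \bar R} :
  borel_fun dist rho1 -> borel_fun dist rho2 ->
  (forall x, 0 <= rho1 x)%E -> (forall x, 0 <= rho2 x)%E ->
  (\int[mu]_x (maxe (rho1 x) (rho2 x) `^ p) <=
   \int[mu]_x (rho1 x `^ p) + \int[mu]_x (rho2 x `^ p))%E.
Proof.
move=> brho1 brho2 rho10 rho20.
have mp rho : borel_fun dist rho -> measurable_fun setT (fun x => rho x `^ p)%E.
  by move=> /borel_fun_measurable; exact: measurableT_comp (measurable_poweR p).
have pow0 rho x : (0 <= rho x `^ p)%E by exact: poweR_ge0.
rewrite -ge0_integralD //; [|exact: mp|exact: mp].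
apply: ge0_le_integral => //.
- by apply: mp; exact: borel_fun_maxe.
- exact: emeasurable_funD (mp _ brho1) (mp _ brho2).
move=> x _; have [r12|r21] := leP (rho1 x) (rho2 x).
  by rewrite leeDr.
by rewrite leeDl.
Qed.

End Modulus.

Theorem lemma3p4 (R : realType) (d : measure_display) (X : measurableType d)
  (dist : X -> X -> R) (mu : {measure set X -> \bar R}) (p : R)
  (hp : 1 <= p)
  (hmetric : is_metric dist)
  (hborel : forall A : set X, dborel dist A -> measurable A)
  (hcomplete : forall N : set X, mu.-negligible N -> measurable N)
  (hball : forall (x : X) (r : R), 0 < r ->
     (0 < mu (dball dist x r))%E /\ (mu (dball dist x r) < +oo)%E)
  (U E : set X) (hU : p_path_open dist mu p U) (hEU : E `<=` U) :
  Mod dist mu p (Gamma dist E U) = Mod dist mu p (Gamma dist E setT).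
Proof.
apply/le_anti/andP; split.
  by apply: Mod_subset => c [hc [_ hE]].
case: hU => Gam0 Mod_Gam0 hUo.
apply/ereal_infP => _ [rho1 adm1 <-].
apply/lee_addgt0Pr => e e0.
have /ereal_inf_lt [_ [rho2 adm2 <-] int_rho2] : (Mod dist mu p Gam0 < e%:E)%E.
  by rewrite Mod_Gam0 lte_fin.
have adm := admissible_Gamma_maxe hmetric hEU hUo adm1 adm2.
apply: le_trans (ereal_inf_lbound (ex_intro2 _ _ _ adm erefl)) _.
apply: le_trans (integral_maxe_poweR_le hborel
  adm1.1 adm2.1 adm1.2.1 adm2.2.1) _.
by rewrite leeD2l // ltW.
Qed.
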